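(* If $\mathcal{C}$ is a prevariety over a finite alphabet $A$, then $\mathit{SF}(\mathcal{C})$ is a prevariety closed under concatenation.
   Context: Fix a finite alphabet $A$. A prevariety is a class of regular languages over $A$ containing $\emptyset$ and $A^*$, closed under union, intersection, complement, and under the quotients $u^{-1}L=\{w\mid uw\in L\}$ and $Lu^{-1}=\{w\mid wu\in L\}$ for $u\in A^*$. $\mathit{SF}(\mathcal{C})$ is the least class containing $\mathcal{C}$ and all singletons $\{a\}$ ($a\in A$), closed under union, complement and concatenation. *)

From mathcomp Require Import all_boot.
Set Implicit Arguments. Unset Strict Implicit. Unset Printing Implicit Defensive.

(* Equality of languages is Leibniz equality of predicates, which
   (with functional and propositional extensionality) is set equality. *)
Definition lang (A : finType) := seq A -> Prop.

Definition regular (A : finType) (L : lang A) : Prop :=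
  exists (Q : finType) (q0 : Q) (delta : Q -> A -> Q) (F : pred Q),
    forall w, L w <-> F (foldl delta q0 w).

Definition lempty (A : finType) : lang A := fun _ => False.
Definition lfull (A : finType) : lang A := fun _ => True.
Definition lunion (A : finType) (L1 L2 : lang A) : lang A := fun w => L1 w \/ L2 w.
Definition linter (A : finType) (L1 L2 : lang A) : lang A := fun w => L1 w /\ L2 w.
Definition lcompl (A : finType) (L : lang A) : lang A := fun w => ~ L w.
Definition lsingle (A : finType) (a : A) : lang A := fun w => w = [:: a].
Definition lconcat (A : finType) (L1 L2 : lang A) : lang A :=
  fun w => exists u v, w = u ++ v /\ L1 u /\ L2 v.
Definition lquot_l (A : finType) (u : seq A) (L : lang A) : lang A := fun w => L (u ++ w).
Definition lquot_r (A : finType) (L : lang A) (u : seq A) : lang A := fun w => L (w ++ u).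

Definition prevariety (A : finType) (C : lang A -> Prop) : Prop :=
  (forall L, C L -> regular L) /\
  C (@lempty A) /\ C (@lfull A) /\
  (forall L1 L2, C L1 -> C L2 -> C (lunion L1 L2)) /\
  (forall L1 L2, C L1 -> C L2 -> C (linter L1 L2)) /\
  (forall L, C L -> C (lcompl L)) /\
  (forall u L, C L -> C (lquot_l u L)) /\
  (forall u L, C L -> C (lquot_r L u)).

Definition closed_under_concat (A : finType) (C : lang A -> Prop) : Prop :=
  forall L1 L2, C L1 -> C L2 -> C (lconcat L1 L2).

Inductive SF (A : finType) (C : lang A -> Prop) : lang A -> Prop :=
  | SF_base L : C L -> SF C L
  | SF_single (a : A) : SF C (lsingle a)
  | SF_union L1 L2 : SF C L1 -> SF C L2 -> SF C (lunion L1 L2)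
  | SF_compl L : SF C L -> SF C (lcompl L)
  | SF_concat L1 L2 : SF C L1 -> SF C L2 -> SF C (lconcat L1 L2).

From mathcomp Require Import all_boot.
From Stdlib Require Import Classical FunctionalExtensionality PropExtensionality.
Set Implicit Arguments. Unset Strict Implicit. Unset Printing Implicit Defensive.

(* Regularity of SF(C) is the usual closure of DFA languages under the
   Boolean operations and concatenation (subset construction).  For the
   quotients it suffices to treat a single letter, and the letter
   derivatives are computed by Brzozowski's rules
     a^{-1}(L1 L2) = (a^{-1}L1) L2  ∪  [ε ∈ L1] a^{-1}L2,
     a^{-1}{b}     = [a = b] {ε},
   whose right-hand sides stay in SF(C) once SF(C) is known to contain the
   constant languages, {ε} = A^* \ A A^*, and the quotients of C. *)

Section Languages.

Variable A : finType.
Implicit Types (L : lang A) (u w : seq A) (a b : A).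

Lemma lang_ext L1 L2 : (forall w, L1 w <-> L2 w) -> L1 = L2.
Proof.
move=> eqL; apply: functional_extensionality => w.
exact: propositional_extensionality.
Qed.

Definition lconst (P : Prop) : lang A := fun _ => P.

Definition leps : lang A := fun w => w = [::].

Definition lletters (s : seq A) : lang A := fun w => exists2 a, a \in s & w = [:: a].

Lemma lletters_nil : lletters [::] = @lempty A.
Proof. by apply: lang_ext => w; split => // -[]. Qed.

Lemma lletters_cons a s : lletters (a :: s) = lunion (lsingle a) (lletters s).
Proof.
apply: lang_ext => w; split.
  by case=> b; rewrite in_cons => /orP [/eqP -> ->|bs ->]; [left|right; exists b].
case=> [->|[b bs ->]]; first by exists a; rewrite ?in_cons ?eqxx.
by exists b; rewrite ?in_cons ?bs ?orbT.
Qed.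

Lemma leps_compl_letter_prefix :
  leps = lcompl (lconcat (lletters (enum A)) (@lfull A)).
Proof.
apply: lang_ext => w; split.
  by move=> -> [u [v [e [[a _ ua] _]]]]; rewrite ua in e.
case: w => [|a w] // noprefix; exfalso; apply: noprefix.
by exists [:: a], w; split; last split; [| exists a; rewrite ?mem_enum |].
Qed.

Lemma linter_compl L1 L2 : linter L1 L2 = lcompl (lunion (lcompl L1) (lcompl L2)).
Proof. by apply: lang_ext => w; rewrite /linter /lcompl /lunion; tauto. Qed.

Lemma lquot_l1_lsingle a b : lquot_l [:: a] (lsingle b) = linter (lconst (a = b)) leps.
Proof. by apply: lang_ext => w; split => [[-> ->]|[-> ->]]. Qed.

Lemma lquot_r1_lsingle a b : lquot_r (lsingle b) [:: a] = linter (lconst (a = b)) leps.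
Proof.
apply: lang_ext => w; split; last by case=> -> ->.
by case: w => [|x [|y w]] // [->].
Qed.

Lemma lquot_l1_lconcat a L1 L2 :
  lquot_l [:: a] (lconcat L1 L2) =
  lunion (lconcat (lquot_l [:: a] L1) L2) (linter (lconst (L1 [::])) (lquot_l [:: a] L2)).
Proof.
apply: lang_ext => w; split.
  case=> -[|b u] [v [/= e [L1u L2v]]]; first by right; split; rewrite // /lquot_l /= e.
  by case: e => -> ->; left; exists u, v.
by case=> [[u [v [-> [L1au L2v]]]]|[L1e L2aw]]; [exists (a :: u), v | exists [::], (a :: w)].
Qed.

Lemma lquot_r1_lconcat a L1 L2 :
  lquot_r (lconcat L1 L2) [:: a] =
  lunion (lconcat L1 (lquot_r L2 [:: a])) (linter (lconst (L2 [::])) (lquot_r L1 [:: a])).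
Proof.
apply: lang_ext => w; split.
  case=> u [v]; case/lastP: v => [|v b] [e [L1u L2v]].
    by right; rewrite cats0 in e; split; rewrite // /lquot_r e.
  move: e; rewrite cats1 -rcons_cat => /rcons_inj [-> ->].
  by left; exists u, v; rewrite /lquot_r cats1.
case=> [[u [v [-> [L1u L2va]]]]|[L2e L1wa]].
  by exists u, (v ++ [:: a]); rewrite catA.
by exists (w ++ [:: a]), [::]; rewrite cats0.
Qed.

Lemma lquot_r_rcons L u a : lquot_r L (rcons u a) = lquot_r (lquot_r L [:: a]) u.
Proof. by apply: lang_ext => w; rewrite /lquot_r -cats1 catA. Qed.

Lemma lquot_r_nil L : lquot_r L [::] = L.
Proof. by apply: lang_ext => w; rewrite /lquot_r cats0. Qed.

End Languages.

Section Regular.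

Variable A : finType.
Implicit Types (L : lang A) (w : seq A) (a : A).

(* States: [Some false] initial, [Some true] after reading [a], [None] dead. *)
Definition letter_dfa_step (a : A) (q : option bool) (x : A) : option bool :=
  if q is Some false then (if x == a then Some true else None) else None.

Lemma regular_lsingle a : regular (lsingle a).
Proof.
have dead w : foldl (letter_dfa_step a) None w = None by elim: w.
exists (option bool), (Some false), (letter_dfa_step a), (pred1 (Some true)) => w.
split=> [->|]; first by rewrite /= eqxx.
case: w => [|x w] //=; have [->|_] := eqVneq x a; last by rewrite dead.
by case: w => [|y w] //=; rewrite dead.
Qed.

Lemma regular_lcompl L : regular L -> regular (lcompl L).
Proof.
case=> Q [q0 [d [F accL]]]; exists Q, q0, d, (predC F) => w.
by rewrite /lcompl accL /=; split => /negP.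
Qed.

Lemma foldl_pair (Q1 Q2 : Type) (d1 : Q1 -> A -> Q1) (d2 : Q2 -> A -> Q2) w p q :
  foldl (fun s x => (d1 s.1 x, d2 s.2 x)) (p, q) w = (foldl d1 p w, foldl d2 q w).
Proof. by elim: w p q => //= x w IHw p q; rewrite IHw. Qed.

Lemma regular_lunion L1 L2 : regular L1 -> regular L2 -> regular (lunion L1 L2).
Proof.
case=> Q1 [p0 [d1 [F1 acc1]]] [Q2 [q0 [d2 [F2 acc2]]]].
exists (Q1 * Q2)%type, (p0, q0), (fun s x => (d1 s.1 x, d2 s.2 x)),
  (fun s => F1 s.1 || F2 s.2) => w.
rewrite foldl_pair /lunion /= acc1 acc2.
by split=> [[]->|/orP[]]; rewrite ?orbT; [..|left|right].
Qed.

Section Concat.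

Variables (Q1 Q2 : finType) (d1 : Q1 -> A -> Q1) (d2 : Q2 -> A -> Q2).
Variables (F1 : pred Q1) (q01 : Q1) (q02 : Q2).

(* Run the first automaton, and keep the set of states reached by the second
   automaton started at every cut point where the first one accepted. *)
Definition concat_start : {set Q2} := if F1 q01 then [set q02] else set0.

Definition concat_step (p : Q1 * {set Q2}) (x : A) : Q1 * {set Q2} :=
  let q := d1 p.1 x in (q, [set d2 s x | s in p.2] :|: (if F1 q then [set q02] else set0)).

Lemma concat_run w :
  let S := foldl concat_step (q01, concat_start) w in
  S.1 = foldl d1 q01 w /\ forall s, (s \in S.2) <->
    exists u v, w = u ++ v /\ F1 (foldl d1 q01 u) /\ s = foldl d2 q02 v.
Proof.
elim/last_ind: w => [|w x [IH1 IH2]] /=.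
  split=> // s; rewrite /concat_start; split.
    by case: ifP => F1q0; rewrite ?in_set0 // in_set1 => /eqP ->; exists [::], [::].
  by case=> -[|??] [[|??] [//= _ [-> ->]]]; rewrite in_set1.
rewrite foldl_rcons /=; split; first by rewrite IH1 foldl_rcons.
move=> s; rewrite in_setU IH1; split.
  case/orP => [/imsetP [s0 /IH2 [u [v [-> [F1u ->]]]] ->] | fresh].
    by exists u, (rcons v x); rewrite rcons_cat foldl_rcons.
  exists (rcons w x), [::]; rewrite cats0 foldl_rcons.
  by case: ifP fresh; rewrite ?in_set0 ?in_set1 // => _ /eqP ->.
case=> u [v]; case/lastP: v => [|v y] [e [F1u ->]].
  by rewrite cats0 in e; rewrite -e foldl_rcons in F1u; rewrite F1u in_set1 eqxx orbT.
move: e; rewrite -rcons_cat => /rcons_inj [e <-].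
apply/orP; left; apply/imsetP; exists (foldl d2 q02 v); last by rewrite foldl_rcons.
by apply/IH2; exists u, v.
Qed.

End Concat.

Lemma regular_lconcat L1 L2 : regular L1 -> regular L2 -> regular (lconcat L1 L2).
Proof.
case=> Q1 [p0 [d1 [F1 acc1]]] [Q2 [q0 [d2 [F2 acc2]]]].
exists (Q1 * {set Q2})%type, (p0, concat_start F1 p0 q0), (concat_step d1 d2 F1 q0),
  (fun p : Q1 * {set Q2} => [exists s in p.2, F2 s]) => w.
have [_ cut] := concat_run d1 d2 F1 p0 q0 w.
split=> [[u [v [e [L1u L2v]]]]|/existsP [s /andP [/cut [u [v [e [F1u ->]]]] F2s]]].
  apply/existsP; exists (foldl d2 q0 v); apply/andP; split; last exact/acc2.
  by apply/cut; exists u, v; rewrite -acc1.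
by exists u, v; rewrite acc1 acc2.
Qed.

Lemma SF_regular (C : lang A -> Prop) :
  (forall L, C L -> regular L) -> forall L, SF C L -> regular L.
Proof.
move=> regC L; elim=> {L}.
- exact: regC.
- exact: regular_lsingle.
- by move=> ? ? _ ? _ ?; apply: regular_lunion.
- by move=> ? _ ?; apply: regular_lcompl.
- by move=> ? ? _ ? _ ?; apply: regular_lconcat.
Qed.

End Regular.

Section SFClosure.

Variables (A : finType) (C : lang A -> Prop).
Hypothesis C_lempty : C (@lempty A).
Hypothesis C_lquot_l : forall u L, C L -> C (lquot_l u L).
Hypothesis C_lquot_r : forall u L, C L -> C (lquot_r L u).
Implicit Types (L : lang A) (u : seq A) (a : A).

Lemma SF_lempty : SF C (@lempty A).
Proof. exact: SF_base. Qed.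

Lemma SF_lfull : SF C (@lfull A).
Proof.
have -> : @lfull A = lcompl (@lempty A) by apply: lang_ext => w; split => // _ [].
exact: SF_compl SF_lempty.
Qed.

Lemma SF_linter L1 L2 : SF C L1 -> SF C L2 -> SF C (linter L1 L2).
Proof.
move=> S1 S2; rewrite linter_compl.
exact: SF_compl (SF_union (SF_compl S1) (SF_compl S2)).
Qed.

Lemma SF_lconst (P : Prop) : SF C (@lconst A P).
Proof.
have [p|np] := classic P.
  have -> : @lconst A P = @lfull A by apply: lang_ext.
  exact: SF_lfull.
have -> : @lconst A P = @lempty A by apply: lang_ext.
exact: SF_lempty.
Qed.

Lemma SF_lletters s : SF C (lletters s).
Proof.
elim: s => [|a s IHs]; first by rewrite lletters_nil; apply: SF_lempty.
by rewrite lletters_cons; exact: SF_union (SF_single _ _) IHs.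
Qed.

Lemma SF_leps : SF C (@leps A).
Proof.
rewrite leps_compl_letter_prefix.
exact: SF_compl (SF_concat (SF_lletters _) SF_lfull).
Qed.

Lemma SF_lquot_l1 a L : SF C L -> SF C (lquot_l [:: a] L).
Proof.
elim=> {L}.
- by move=> L /C_lquot_l /SF_base.
- by move=> b; rewrite lquot_l1_lsingle; exact: SF_linter (SF_lconst _) SF_leps.
- by move=> ? ? _ S1 _ S2; apply: SF_union S1 S2.
- by move=> ? _ S; apply: SF_compl S.
- move=> ? ? _ Sa1 S2 Sa2; rewrite lquot_l1_lconcat.
  exact: SF_union (SF_concat Sa1 S2) (SF_linter (SF_lconst _) Sa2).
Qed.

Lemma SF_lquot_l u L : SF C L -> SF C (lquot_l u L).
Proof.
elim: u L => [|a u IHu] L SL //.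
exact: IHu (SF_lquot_l1 a SL).
Qed.

Lemma SF_lquot_r1 a L : SF C L -> SF C (lquot_r L [:: a]).
Proof.
elim=> {L}.
- by move=> L /C_lquot_r /SF_base.
- by move=> b; rewrite lquot_r1_lsingle; exact: SF_linter (SF_lconst _) SF_leps.
- by move=> ? ? _ S1 _ S2; apply: SF_union S1 S2.
- by move=> ? _ S; apply: SF_compl S.
- move=> ? ? S1 Sa1 _ Sa2; rewrite lquot_r1_lconcat.
  exact: SF_union (SF_concat S1 Sa2) (SF_linter (SF_lconst _) Sa1).
Qed.

Lemma SF_lquot_r u L : SF C L -> SF C (lquot_r L u).
Proof.
elim/last_ind: u L => [|u a IHu] L SL; first by rewrite lquot_r_nil.
by rewrite lquot_r_rcons; exact: IHu (SF_lquot_r1 a SL).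
Qed.

End SFClosure.

Theorem proposition3p2 (A : finType) (C : lang A -> Prop) :
  prevariety C -> prevariety (SF C) /\ closed_under_concat (SF C).
Proof.
case=> regC [C0 [_ [_ [_ [_ [C_lquot_l C_lquot_r]]]]]].
split; last by move=> L1 L2; apply: SF_concat.
split; first exact: SF_regular.
split; first exact: SF_lempty.
split; first exact: SF_lfull.
split; first by move=> L1 L2; apply: SF_union.
split; first exact: SF_linter.
split; first by move=> L; apply: SF_compl.
by split=> u L; [exact: SF_lquot_l | exact: SF_lquot_r].
Qed.
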